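(* Let $G=(V,E)$ be a simple, connected graph. Then there exists a partition $V = A \cup B \cup C$ into pairwise disjoint sets ($C$ possibly empty) such that: (1) every $v \in A$ satisfies $d_B(v) \geq d_A(v) + \max\{1, d_C(v)\}$; (2) every $v \in B$ satisfies $d_A(v) \geq d_B(v) + \max\{1, d_C(v)\}$; (3) no two vertices of $C$ are joined by an edge, i.e. $d_C(v) = 0$ for all $v \in C$; (4) every $v \in C$ satisfies $d_A(v) = d_B(v)$; (5) $\# E(A \cup B, C) + 2\# E(A,A) + 2\# E(B,B) \leq 2\# E(A,B)$.
   Context: For a vertex $v$ and a set $S \subseteq V$, $d_S(v)$ denotes the number of neighbors of $v$ lying in $S$. For disjoint $X, Y \subseteq V$, $\# E(X,Y)$ is the number of edges with one endpoint in $X$ and the other in $Y$; $\# E(X,X)$ is the number of edges with both endpoints in $X$. *)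

From mathcomp Require Import all_boot.
Set Implicit Arguments. Unset Strict Implicit. Unset Printing Implicit Defensive.

Definition simple_graph (T : finType) (e : rel T) : Prop :=
  symmetric e /\ irreflexive e.

Definition connected_graph (T : finType) (e : rel T) : Prop :=
  forall x y : T, connect e x y.

Definition deg_in (T : finType) (e : rel T) (S : {set T}) (v : T) : nat :=
  #|[set u in S | e v u]|.

Definition edges (T : finType) (e : rel T) : {set {set T}} :=
  [set E : {set T} | [exists x, exists y, e x y && (E == [set x; y])]].

Definition nedges_between (T : finType) (e : rel T) (X Y : {set T}) : nat :=
  #|[set E in edges e | [exists x in X, exists y in Y, E == [set x; y]]]|.

Definition nedges_within (T : finType) (e : rel T) (X : {set T}) : nat :=
  #|[set E in edges e | E \subset X]|.

From mathcomp Require Import all_boot all_order all_algebra.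
From mathcomp Require Import zify ring.
Set Implicit Arguments. Unset Strict Implicit. Unset Printing Implicit Defensive.
Import Order.TTheory GRing.Theory.

(* Encode a partition by spins h = +1 on A, -1 on B, 0 on C, and let the energy be
   the sum of h(x) h(y) over ordered pairs of adjacent vertices, that is
   2 (#E(A,A) + #E(B,B) - #E(A,B)).  Take a partition with C independent that
   minimises the energy and, among those, maximises |C|.  Moving a vertex of C
   into A or into B changes the energy by +-2 (d_A - d_B), which gives (4).
   Moving a vertex v of A into C, together with its C-neighbours into A, changes
   it by -2 (d_A(v) - d_B(v)) - 2 d_C(v), the moved neighbours being balanced by
   (4); this gives (1), strictly when d_C(v) = 0 since then |C| grows.  (2) is
   symmetric, and (5) follows by summing (1) and (2) over A and B. *)

Section Energy.
Local Open Scope ring_scope.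
Variables (T : finType) (e : rel T).
Hypotheses (e_sym : symmetric e) (e_irr : irreflexive e).

Definition energy (h : T -> int) : int := \sum_x \sum_y (e x y)%:R * h x * h y.

Definition nbr_sum (h : T -> int) (x : T) : int := \sum_y (e x y)%:R * h y.

Lemma eq_energy h1 h2 : h1 =1 h2 -> energy h1 = energy h2.
Proof. by move=> eq_h; apply: eq_bigr => x _; apply: eq_bigr => y _; rewrite !eq_h. Qed.

Lemma energyD (h t : T -> int) :
  energy (fun x => h x + t x) = energy h + 2 * \sum_x t x * nbr_sum h x + energy t.
Proof.
have cross : \sum_x \sum_y (e x y)%:R * t x * h y = \sum_x t x * nbr_sum h x.
  by apply: eq_bigr => x _; rewrite mulr_sumr; apply: eq_bigr => y _; ring.
have swap : \sum_x \sum_y (e x y)%:R * h x * t y = \sum_x \sum_y (e x y)%:R * t x * h y.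
  by rewrite exchange_big; apply: eq_bigr => y _; apply: eq_bigr => x _; rewrite e_sym; ring.
have -> : energy (fun x => h x + t x) =
    energy h + \sum_x \sum_y (e x y)%:R * t x * h y
    + \sum_x \sum_y (e x y)%:R * h x * t y + energy t.
  rewrite /energy -!big_split; apply: eq_bigr => x _; rewrite -!big_split.
  by apply: eq_bigr => y _ /=; ring.
by rewrite swap cross; ring.
Qed.

Lemma energy_eq0 (t : T -> int) :
  (forall x y, t x != 0 -> t y != 0 -> ~~ e x y) -> energy t = 0.
Proof.
move=> indep; apply: big1 => x _; apply: big1 => y _.
have [->|tx] := eqVneq (t x) 0; first by rewrite mulr0 mul0r.
have [->|ty] := eqVneq (t y) 0; first by rewrite mulr0.
by rewrite (negbTE (indep _ _ tx ty)) !mul0r.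
Qed.

Lemma energyD_delta (h : T -> int) v c :
  energy (fun x => h x + (x == v)%:R * c) = energy h + 2 * c * nbr_sum h v.
Proof.
rewrite energyD (@energy_eq0 (fun x => (x == v)%:R * c)); last first.
  move=> x y; have [->|] := eqVneq x v; last by rewrite mul0r eqxx.
  by have [->|] := eqVneq y v; [rewrite e_irr | rewrite mul0r eqxx].
rewrite addr0 (bigD1 v) //= big1 ?addr0 ?eqxx ?mul1r ?mulrA //.
by move=> x /negbTE ->; rewrite !mul0r.
Qed.

Lemma nbr_sumD_delta (h : T -> int) v c x :
  nbr_sum (fun y => h y + (y == v)%:R * c) x = nbr_sum h x + (e x v)%:R * c.
Proof.
rewrite /nbr_sum; under eq_bigr do rewrite mulrDr; rewrite big_split /=; congr (_ + _).
rewrite (bigD1 v) //= big1 ?addr0 ?eqxx ?mul1r // => y /negbTE ->.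
by rewrite mul0r mulr0.
Qed.

End Energy.

Lemma natr_card_set (T : finType) (P : pred T) :
  (#|[set u | P u]|%:R = \sum_u (P u)%:R :> int)%R.
Proof.
rewrite cardsE -sum1_card natr_sum big_mkcond /=; apply: eq_bigr => u _.
by rewrite unfold_in; case: (P u).
Qed.

Section Counting.
Variables (T : finType) (e : rel T).
Hypotheses (e_sym : symmetric e) (e_irr : irreflexive e).

Definition arcs (X Y : {set T}) := [set p : T * T | [&& p.1 \in X, p.2 \in Y & e p.1 p.2]].

Definition endpoints (p : T * T) : {set T} := [set p.1; p.2].

Lemma sum_deg_in (X Y : {set T}) : \sum_(x in X) deg_in e Y x = #|arcs X Y|.
Proof.
rewrite -sum1_card (partition_big fst (mem X)) /=; last by move=> [x y]; rewrite inE => /and3P[].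
apply: eq_bigr => x xX; rewrite /deg_in -sum1_card.
rewrite (reindex_onto (fun y => (x, y)) snd) /=; last by move=> [x' y] /andP[_ /eqP <-].
by apply: eq_bigl => y; rewrite !inE xX /= !eqxx !andbT.
Qed.

Lemma edge_of_endpoints a b x y : e a b -> [set a; b] = [set x; y] -> e x y.
Proof.
move=> eab ab_xy.
have a_xy : a \in [set x; y] by rewrite -ab_xy set21.
have b_xy : b \in [set x; y] by rewrite -ab_xy set22.
have x_ab : x \in [set a; b] by rewrite ab_xy set21.
have y_ab : y \in [set a; b] by rewrite ab_xy set22.
case/set2P: x_ab y_ab b_xy a_xy => -> /set2P[] -> //.
- by rewrite setUid => /set1P eq_ba; rewrite eq_ba e_irr in eab.
- by rewrite e_sym.
- by rewrite setUid => _ /set1P eq_ab; rewrite eq_ab e_irr in eab.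
Qed.

Lemma nedges_between_le_arcs (X Y : {set T}) : nedges_between e X Y <= #|arcs X Y|.
Proof.
apply: leq_trans (leq_imset_card endpoints _); apply: subset_leq_card.
apply/subsetP => E; rewrite !inE => /andP[/existsP[a /existsP[b /andP[eab /eqP E_ab]]]].
case/existsP=> x /andP[xX /existsP[y /andP[yY /eqP E_xy]]].
apply/imsetP; exists (x, y); last by rewrite E_xy.
by rewrite !inE /= xX yY (edge_of_endpoints eab (etrans (esym E_ab) E_xy)).
Qed.

Lemma arcs_le_nedges_between (X Y : {set T}) :
  [disjoint X & Y] -> #|arcs X Y| <= nedges_between e X Y.
Proof.
move=> dXY; rewrite -(card_in_imset (f := endpoints)); last first.
  move=> [x y] [x' y']; rewrite !inE /= => /and3P[xX yY _] /and3P[x'X y'Y _].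
  rewrite /endpoints /= => eq_xy.
  have XY z : z \in X -> z \in Y -> False by move=> zX; rewrite (disjointFr dXY zX).
  have := set21 x y; rewrite eq_xy => /set2P[x_x'|x_y']; last by case: (XY x); rewrite // x_y'.
  have := set22 x y; rewrite eq_xy => /set2P[y_x'|y_y']; first by case: (XY y); rewrite // y_x'.
  by rewrite x_x' y_y'.
apply: subset_leq_card; apply/subsetP => E /imsetP[[x y]].
rewrite !inE /= => /and3P[xX yY exy] ->; apply/andP; split.
  by apply/existsP; exists x; apply/existsP; exists y; rewrite exy eqxx.
by apply/existsP; exists x; rewrite xX; apply/existsP; exists y; rewrite yY eqxx.
Qed.

Lemma nedges_betweenC (X Y : {set T}) : nedges_between e X Y = nedges_between e Y X.
Proof.
apply: eq_card => E; rewrite !inE; congr (_ && _).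
apply/existsP/existsP => -[x /andP[xX /existsP[y /andP[yY /eqP ->]]]];
  by exists y; rewrite yY; apply/existsP; exists x; rewrite xX setUC eqxx.
Qed.

Lemma nedges_within_le_arcs (X : {set T}) : 2 * nedges_within e X <= #|arcs X X|.
Proof.
rewrite -sum1_card (partition_big endpoints (mem [set E in edges e | E \subset X])) /=; last first.
  move=> [x y]; rewrite !inE /= => /and3P[xX yX exy]; apply/andP; split.
    by apply/existsP; exists x; apply/existsP; exists y; rewrite exy eqxx.
  by apply/subsetP => z /set2P[] ->.
rewrite /nedges_within -sum1_card big_distrr /=.
apply: leq_sum => E; rewrite !inE => /andP[/existsP[x /existsP[y /andP[exy /eqP E_xy]]] EX].
have xX : x \in X by apply: (subsetP EX); rewrite E_xy set21.
have yX : y \in X by apply: (subsetP EX); rewrite E_xy set22.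
have xy_yx : (x, y) != (y, x) by apply: contraTneq exy => -[->]; rewrite e_irr.
rewrite muln1 sum1dep_card.
apply: leq_trans (_ : 2 <= #|[set (x, y); (y, x)]|) _; first by rewrite cards2 xy_yx.
apply: subset_leq_card; apply/subsetP => p /set2P[] ->; rewrite !inE /= xX yX /endpoints /= E_xy.
  by rewrite exy eqxx.
by rewrite e_sym exy setUC eqxx.
Qed.

Lemma edge_count_of_degrees (A B C : {set T}) : [disjoint A & B] ->
    {in A, forall v, deg_in e A v + deg_in e C v <= deg_in e B v} ->
    {in B, forall v, deg_in e B v + deg_in e C v <= deg_in e A v} ->
  nedges_between e (A :|: B) C + 2 * nedges_within e A + 2 * nedges_within e B
    <= 2 * nedges_between e A B.
Proof.
move=> dAB degA degB.
have sumA : \sum_(v in A) (deg_in e A v + deg_in e C v) <= \sum_(v in A) deg_in e B v.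
  exact: leq_sum.
have sumB : \sum_(v in B) (deg_in e B v + deg_in e C v) <= \sum_(v in B) deg_in e A v.
  exact: leq_sum.
rewrite !big_split /= !sum_deg_in in sumA sumB.
have AB_C : nedges_between e (A :|: B) C <= #|arcs A C| + #|arcs B C|.
  rewrite -!sum_deg_in -bigU // (eq_bigl (mem (A :|: B))) => [|v]; last by rewrite !inE.
  by rewrite sum_deg_in nedges_between_le_arcs.
have AA := nedges_within_le_arcs A; have BB := nedges_within_le_arcs B.
have AB := arcs_le_nedges_between dAB.
have BA : #|arcs B A| <= nedges_between e B A.
  by rewrite arcs_le_nedges_between // disjoint_sym.
rewrite nedges_betweenC in BA; lia.
Qed.

End Counting.

Section Independent.
Variables (T : finType) (e : rel T).

Definition independent (S : {set T}) := [forall x in S, forall y in S, ~~ e x y].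

Lemma independentP (S : {set T}) :
  reflect {in S &, forall x y, ~~ e x y} (independent S).
Proof.
apply: (iffP forall_inP) => [indep x y xS yS | indep x xS].
  exact: (forall_inP (indep x xS)).
by apply/forall_inP => y yS; apply: indep.
Qed.

Lemma independentS (S1 S2 : {set T}) :
  S1 \subset S2 -> independent S2 -> independent S1.
Proof.
move=> /subsetP sub /independentP indep; apply/independentP => x y xS yS.
by apply: indep; apply: sub.
Qed.

Lemma deg_in_independent (S : {set T}) v : independent S -> v \in S -> deg_in e S v = 0.
Proof.
move=> /independentP indep vS; apply/eqP; rewrite cards_eq0; apply/eqP/setP => u.
rewrite !inE; apply/negbTE/nandP; have [uS|] := boolP (u \in S); last by left.
by right; apply: indep.
Qed.

End Independent.

Section Partition.
Local Open Scope ring_scope.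
Variables (T : finType) (e : rel T).
Hypotheses (e_sym : symmetric e) (e_irr : irreflexive e).

Local Notation colouring := {ffun T -> option bool}.

Definition spin (s : option bool) : int :=
  match s with Some true => 1 | Some false => -1 | None => 0 end.

Definition part (f : colouring) s := [set x | f x == s].

Lemma disjoint_part (f : colouring) s1 s2 :
  s1 != s2 -> [disjoint part f s1 & part f s2].
Proof.
move=> s12; rewrite -setI_eq0; apply/eqP/setP => x; rewrite !inE.
by apply/negbTE; apply: contra s12 => /andP[/eqP <- /eqP ->].
Qed.

Lemma part_cover (f : colouring) :
  part f (Some true) :|: part f (Some false) :|: part f None = setT.
Proof. by apply/setP => x; rewrite !inE; case: (f x) => [[]|]. Qed.

Lemma spin_nbr_sum (f : colouring) b x :
  spin (Some b) * nbr_sum e (spin \o f) x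
  = (deg_in e (part f (Some b)) x)%:R - (deg_in e (part f (Some (~~ b))) x)%:R.
Proof.
rewrite /deg_in !natr_card_set -sumrB mulr_sumr; apply: eq_bigr => y _.
by rewrite !inE /=; case: (e x y) (f y) b => [] [[]|] [].
Qed.

Definition feasible (f : colouring) := independent e (part f None).

Definition lex_optimal (f : colouring) : Prop :=
  feasible f /\ forall g, feasible g ->
    energy e (spin \o f) <= energy e (spin \o g) /\
    (energy e (spin \o g) = energy e (spin \o f) -> #|part g None| <= #|part f None|)%N.

Lemma exists_lex_optimal : exists f, lex_optimal f.
Proof.
(* The weight #|T|.+1 exceeds any change of #|part f None|, so the energy
   is minimised first. *)
pose score f : int := #|part f None|%:R - (#|T|.+1)%:R * energy e (spin \o f).
have feasible_true : feasible [ffun => Some true].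
  by apply/independentP => x y; rewrite !inE ffunE.
have [f f_feas f_max] := arg_maxP score feasible_true.
exists f; split=> // g g_feas; have := f_max g g_feas; rewrite /score => le_score.
have card_f := max_card (part f None); have card_g := max_card (part g None).
split; first by nia.
by move=> eq_energy; rewrite eq_energy in le_score; lia.
Qed.

Section Optimal.
Variable f : colouring.
Hypothesis f_opt : lex_optimal f.

Local Notation h := (spin \o f).
Local Notation C := (part f None).
Local Notation N v := [set u in C | e v u].

Definition recolour v s : colouring := [ffun x => if x == v then s else f x].

Lemma spin_recolour v s :
  spin \o recolour v s =1 (fun x => h x + (x == v)%:R * (spin s - spin (f v))).
Proof.
move=> x; rewrite /= ffunE; have [->|_] := eqVneq x v; last by rewrite mul0r addr0.
by rewrite mul1r addrC subrK.
Qed.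

Lemma nbr_sum_part_None v : f v = None -> nbr_sum e h v = 0.
Proof.
move=> fv.
have nonneg s : s != None -> 0 <= spin s * nbr_sum e h v.
  move=> s_neq; have feas : feasible (recolour v s).
    apply: independentS f_opt.1; apply/subsetP => x; rewrite !inE ffunE.
    by have [_ s_None|//] := eqVneq x v; rewrite s_None in s_neq.
  have [le_energy _] := f_opt.2 _ feas.
  move: le_energy; rewrite (eq_energy e (spin_recolour v s)) energyD_delta // fv subr0.
  lia.
by have := nonneg (Some true) isT; have := nonneg (Some false) isT; rewrite /=; lia.
Qed.

Definition move_to_C v b : colouring :=
  [ffun x => if x == v then None else if x \in N v then Some b else f x].

Lemma part_move_to_C v b : part (move_to_C v b) None = v |: (C :\: N v).
Proof.
apply/setP => x; rewrite !inE ffunE; case: (x == v) => //=.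
by rewrite !inE; case: (f x) => [c|]; case: (e v x).
Qed.

Lemma feasible_move_to_C v b : feasible (move_to_C v b).
Proof.
have /independentP indep_C := f_opt.1.
rewrite /feasible part_move_to_C; apply/independentP => x y.
rewrite !inE => /predU1P[->|/andP[x_nbr xC]] /predU1P[->|/andP[y_nbr yC]].
- by rewrite e_irr.
- by move: y_nbr; rewrite yC.
- by rewrite e_sym; move: x_nbr; rewrite xC.
- by apply: indep_C; rewrite inE.
Qed.

Lemma spin_move_to_C v b : f v = Some b ->
  spin \o move_to_C v b =1
  (fun x => (h x + (x == v)%:R * - spin (Some b)) + (x \in N v)%:R * spin (Some b)).
Proof.
move=> fv x; rewrite [LHS]/= ffunE; have [->|_] := eqVneq x v.
  by rewrite !inE e_irr andbF /= fv mul1r mul0r addr0 subrr.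
have [|_] := boolP (x \in N v); last by rewrite !mulr0n !mul0r !addr0.
by rewrite !inE => /andP[/eqP fx _]; rewrite /= fx mul0r mul1r !add0r.
Qed.

Lemma energy_move_to_C v b : f v = Some b ->
  energy e (spin \o move_to_C v b)
  = energy e h - 2 * spin (Some b) * nbr_sum e h v - 2 * (deg_in e C v)%:R.
Proof.
move=> fv; rewrite (eq_energy e (spin_move_to_C fv)) energyD // energyD_delta //.
have /independentP indep_C := f_opt.1.
rewrite (@energy_eq0 _ _ (fun x => (x \in N v)%:R * spin (Some b))) ?addr0; last first.
  move=> x y; have [|] := boolP (x \in N v); last by rewrite mul0r eqxx.
  have [|] := boolP (y \in N v); last by rewrite mul0r eqxx.
  by rewrite !inE => /andP[yC _] /andP[xC _] _ _; apply: indep_C; rewrite inE.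
have -> : \sum_x (x \in N v)%:R * spin (Some b)
           * nbr_sum e (fun y => h y + (y == v)%:R * - spin (Some b)) x
         = - (deg_in e C v)%:R.
  rewrite /deg_in natr_card_set -sumrN; apply: eq_bigr => x _.
  rewrite nbr_sumD_delta !inE; have [/andP[/eqP fx evx]|_] := boolP (_ && _).
    by rewrite nbr_sum_part_None // e_sym evx; case: b {fv}.
  by rewrite !mul0r oppr0.
ring.
Qed.

Lemma spin_nbr_sum_part_Some v b : f v = Some b ->
  spin (Some b) * nbr_sum e h v + (deg_in e C v)%:R <= 0 /\
  (deg_in e C v = 0%N -> spin (Some b) * nbr_sum e h v < 0).
Proof.
move=> fv; have [le_energy card_le] := f_opt.2 _ (feasible_move_to_C v b).
rewrite energy_move_to_C // in le_energy card_le.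
split=> [|C0]; first lia.
have N0 : N v = set0 by apply/eqP; rewrite -cards_eq0 -/(deg_in e C v) C0.
have card_move : #|part (move_to_C v b) None| = #|C|.+1.
  by rewrite part_move_to_C N0 setD0 cardsU1 inE fv.
move: card_le le_energy; rewrite card_move C0 ltnn mulr0 subr0; lia.
Qed.

Lemma deg_in_part_Some v b : f v = Some b ->
  (deg_in e (part f (Some b)) v + maxn 1 (deg_in e C v)
   <= deg_in e (part f (Some (~~ b))) v)%N.
Proof. by move=> fv; have := spin_nbr_sum_part_Some fv; rewrite spin_nbr_sum; lia. Qed.

Lemma deg_in_part_None v : f v = None ->
  deg_in e (part f (Some true)) v = deg_in e (part f (Some false)) v.
Proof.
move=> fv; have := spin_nbr_sum f true v.
by rewrite nbr_sum_part_None // mulr0 /=; lia.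
Qed.

End Optimal.

End Partition.

Theorem theorem1 (T : finType) (e : rel T) :
  simple_graph e -> connected_graph e ->
  exists A B C : {set T},
    [disjoint A & B] /\ [disjoint A & C] /\ [disjoint B & C] /\
    A :|: B :|: C = [set: T] /\
    (forall v, v \in A ->
       deg_in e B v >= deg_in e A v + maxn 1 (deg_in e C v)) /\
    (forall v, v \in B ->
       deg_in e A v >= deg_in e B v + maxn 1 (deg_in e C v)) /\
    (forall v, v \in C -> deg_in e C v = 0) /\
    (forall v, v \in C -> deg_in e A v = deg_in e B v) /\
    nedges_between e (A :|: B) C + 2 * nedges_within e A
      + 2 * nedges_within e B <= 2 * nedges_between e A B.
Proof.
move=> [e_sym e_irr] _.
have [f f_opt] := exists_lex_optimal e.
set A := part f (Some true); set B := part f (Some false); set C := part f None.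
have degA : {in A, forall v, deg_in e A v + maxn 1 (deg_in e C v) <= deg_in e B v}.
  by move=> v; rewrite inE => /eqP; apply: deg_in_part_Some.
have degB : {in B, forall v, deg_in e B v + maxn 1 (deg_in e C v) <= deg_in e A v}.
  by move=> v; rewrite inE => /eqP; apply: deg_in_part_Some.
exists A, B, C.
do 3 (split; first exact: disjoint_part).
split; first exact: part_cover.
split; first exact: degA.
split; first exact: degB.
split; first by move=> v; apply: deg_in_independent; case: f_opt.
split; first by move=> v; rewrite inE => /eqP; apply: deg_in_part_None.
apply: edge_count_of_degrees; rewrite ?disjoint_part //.
- by move=> v /degA; lia.
- by move=> v /degB; lia.
Qed.
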